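(* Let $\Upsilon$ be a satisfiable label cover instance and let $\Gamma=(\tilde G,\tilde H)$ be any instance produced from it by the reduction described in the context. Then there exists an injective map $\varphi:V_{\tilde G}\to V_{\tilde H}$ that maps every edge of $\tilde G$ to an edge of $\tilde H$. Thus $\mathrm{OPT}_{QAP}(\Gamma)=|E_{\tilde G}|$.
   Context: A label cover instance $\Upsilon=(G=(V_G,E_G),\pi,[k])$ consists of a graph $G$ with $n=|V_G|$ vertices and edge set $E_G$, a label set $[k]=\{0,\dots,k-1\}$, and for each edge $(u,v)\in E_G$ a set $\pi_{uv}\subseteq[k]\times[k]$ of accepted label pairs. For a labeling $\Lambda:V_G\to[k]$, $\mathrm{Val}_{LC}(\Upsilon,\Lambda)=\frac{1}{|E_G|}\sum_{(u,v)\in E_G}\mathbf{1}[(\Lambda(u),\Lambda(v))\in\pi_{uv}]$, and $\mathrm{OPT}_{LC}(\Upsilon)=\max_\Lambda \mathrm{Val}_{LC}(\Upsilon,\Lambda)$; $\Upsilon$ is satisfiable if $\mathrm{OPT}_{LC}(\Upsilon)=1$. The reduction: let $N=\lceil n^4|E_G|k^5\rceil$ and $\alpha=1/n$. Set $V_{\tilde G}=V_G\times[N]$ and $V_{\tilde H}=V_G\times[k]\times[N]$. For every edge $(u,v)$ of $G$, independently choose a random set $\mathcal{E}_{uv}\subseteq[N]\times[N]$ containing each pair independently with probability $\alpha$. Let $E_{\tilde G}=\{((u,i),(v,j)):(u,v)\in E_G,(i,j)\in\mathcal{E}_{uv}\}$ and $E_{\tilde H}=\{((u,x,i),(v,y,j)):(u,v)\in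 E_G,(i,j)\in\mathcal{E}_{uv},(x,y)\in\pi_{uv}\}$. For an injective map $\varphi:V_{\tilde G}\to V_{\tilde H}$, $\mathrm{Val}_{QAP}(\Gamma,\varphi)=\sum_{(a,b)\in E_{\tilde G}}\mathbf{1}[(\varphi(a),\varphi(b))\in E_{\tilde H}]$, and $\mathrm{OPT}_{QAP}(\Gamma)$ is the maximum over injective maps. *)

From mathcomp Require Import all_boot all_order all_algebra.
Set Implicit Arguments. Unset Strict Implicit. Unset Printing Implicit Defensive.
Import Order.TTheory GRing.Theory Num.Theory.

(* Label cover instance: vertex set V_G = 'I_n, label set [k] = 'I_k,
   edge set EG (ordered pairs (u,v)), accepted label pairs pi u v. *)

Definition ValLC (n k : nat) (EG : {set 'I_n * 'I_n})
  (pi : 'I_n -> 'I_n -> {set 'I_k * 'I_k}) (L : {ffun 'I_n -> 'I_k}) : rat :=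
  (#|[set e in EG | (L e.1, L e.2) \in pi e.1 e.2]|%:R / #|EG|%:R)%R.

Definition OPTLC (n k : nat) (EG : {set 'I_n * 'I_n})
  (pi : 'I_n -> 'I_n -> {set 'I_k * 'I_k}) : rat :=
  (\big[Num.max/0]_(L : {ffun 'I_n -> 'I_k}) ValLC EG pi L)%R.

Definition satisfiable (n k : nat) (EG : {set 'I_n * 'I_n})
  (pi : 'I_n -> 'I_n -> {set 'I_k * 'I_k}) : Prop :=
  OPTLC EG pi = 1%R.

(* N = ceil(n^4 |E_G| k^5) (already an integer). *)
Definition Nred (n k : nat) (EG : {set 'I_n * 'I_n}) : nat :=
  n ^ 4 * #|EG| * k ^ 5.

(* The reduction, for a given outcome Ecal u v ⊆ [N]×[N] of the random sets. *)
Section Reduction.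
Variables (n k N : nat) (EG : {set 'I_n * 'I_n})
  (pi : 'I_n -> 'I_n -> {set 'I_k * 'I_k})
  (Ecal : 'I_n -> 'I_n -> {set 'I_N * 'I_N}).

Definition VGt := ('I_n * 'I_N)%type.
Definition VHt := ('I_n * 'I_k * 'I_N)%type.

Definition EGt : {set VGt * VGt} :=
  [set ab : VGt * VGt | ((ab.1.1, ab.2.1) \in EG)
                        && ((ab.1.2, ab.2.2) \in Ecal ab.1.1 ab.2.1)].

Definition EHt : {set VHt * VHt} :=
  [set ab : VHt * VHt | [&& ((ab.1.1.1, ab.2.1.1) \in EG),
                           ((ab.1.2, ab.2.2) \in Ecal ab.1.1.1 ab.2.1.1) &
                           ((ab.1.1.2, ab.2.1.2) \in pi ab.1.1.1 ab.2.1.1)]].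

Definition ValQAP (phi : {ffun VGt -> VHt}) : nat :=
  #|[set ab in EGt | (phi ab.1, phi ab.2) \in EHt]|.

Definition OPTQAP : nat :=
  \max_(phi : {ffun VGt -> VHt} | injectiveb phi) ValQAP phi.
End Reduction.

From mathcomp Require Import all_boot all_order all_algebra.
Import Order.TTheory GRing.Theory Num.Theory.

Set Implicit Arguments.
Unset Strict Implicit.
Unset Printing Implicit Defensive.

(* A satisfying labeling L of the label cover instance yields the embedding
   (u, i) |-> (u, L u, i): an edge ((u,i),(v,j)) of G~ comes from (u,v) in E_G
   with (i,j) in E_uv, and since (L u, L v) is in pi_uv it is also an edge of H~.
   Hence every edge is preserved, and no map can preserve more than all of them. *)

Section LabelCover.
Variables (n k : nat) (EG : {set 'I_n * 'I_n})
  (pi : 'I_n -> 'I_n -> {set 'I_k * 'I_k}).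

Definition satisfied_edges (L : {ffun 'I_n -> 'I_k}) : {set 'I_n * 'I_n} :=
  [set e in EG | (L e.1, L e.2) \in pi e.1 e.2].

Lemma satisfied_edges_sub (L : {ffun 'I_n -> 'I_k}) : satisfied_edges L \subset EG.
Proof. by apply/subsetP => e; rewrite inE => /andP[]. Qed.

Lemma ValLC_lt1 (L : {ffun 'I_n -> 'I_k}) :
  satisfied_edges L != EG -> (ValLC EG pi L < 1)%R.
Proof.
move=> neqL; have subL := satisfied_edges_sub L.
have ltL : (#|satisfied_edges L| < #|EG|)%N.
  by rewrite ltnNge; apply: contra neqL => EG_le; rewrite eqEcard subL.
have EG_gt0 : (0 < #|EG|%:R :> rat)%R by rewrite ltr0n (leq_ltn_trans _ ltL).
by rewrite /ValLC ltr_pdivrMr // mul1r ltr_nat.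
Qed.

Lemma satisfiable_labeling :
  satisfiable EG pi ->
  exists L : {ffun 'I_n -> 'I_k}, forall e, e \in EG -> (L e.1, L e.2) \in pi e.1 e.2.
Proof.
move=> sat; have [L /eqP satL | none] := pickP (fun L => satisfied_edges L == EG).
  by exists L => e; rewrite -satL inE => /andP[].
suff : (OPTLC EG pi < 1)%R by rewrite sat ltxx.
apply: (big_ind (fun x : rat => x < 1)%R) => // [x y|L _]; first by rewrite gt_max => -> ->.
by apply: ValLC_lt1; rewrite none.
Qed.

End LabelCover.

Section Reduction.
Variables (n k N : nat) (EG : {set 'I_n * 'I_n})
  (pi : 'I_n -> 'I_n -> {set 'I_k * 'I_k})
  (Ecal : 'I_n -> 'I_n -> {set 'I_N * 'I_N}).

Lemma ValQAP_le_card (phi : {ffun VGt n N -> VHt n k N}) : (ValQAP EG pi Ecal phi <= #|EGt EG Ecal|)%N.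
Proof. by apply/subset_leq_card/subsetP => ab; rewrite inE => /andP[]. Qed.

Lemma ValQAP_edge_preserving (phi : {ffun VGt n N -> VHt n k N}) :
  (forall a b, (a, b) \in EGt EG Ecal -> (phi a, phi b) \in EHt EG pi Ecal) ->
  ValQAP EG pi Ecal phi = #|EGt EG Ecal|.
Proof.
move=> phiE; apply/eqP; rewrite eqn_leq ValQAP_le_card.
by apply/subset_leq_card/subsetP => -[a b] ab; rewrite inE ab phiE.
Qed.

Lemma OPTQAP_edge_preserving (phi : VGt n N -> VHt n k N) :
  injective phi ->
  (forall a b, (a, b) \in EGt EG Ecal -> (phi a, phi b) \in EHt EG pi Ecal) ->
  OPTQAP EG pi Ecal = #|EGt EG Ecal|.
Proof.
move=> phi_inj phiE; apply/eqP; rewrite eqn_leq.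
apply/andP; split; first by apply/bigmax_leqP => psi _; apply: ValQAP_le_card.
have injF : injectiveb [ffun a => phi a].
  by apply/injectiveP => a b; rewrite !ffunE; apply: phi_inj.
apply: leq_trans (leq_bigmax_cond _ injF).
by rewrite ValQAP_edge_preserving // => a b ab; rewrite !ffunE phiE.
Qed.

Definition label_embedding (L : {ffun 'I_n -> 'I_k}) (a : VGt n N) : VHt n k N :=
  (a.1, L a.1, a.2).

Lemma label_embedding_inj (L : {ffun 'I_n -> 'I_k}) : injective (label_embedding L).
Proof. by move=> [u i] [v j] [-> _ ->]. Qed.

Lemma label_embedding_edge (L : {ffun 'I_n -> 'I_k}) :
  (forall e, e \in EG -> (L e.1, L e.2) \in pi e.1 e.2) ->
  forall a b, (a, b) \in EGt EG Ecal ->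
    (label_embedding L a, label_embedding L b) \in EHt EG pi Ecal.
Proof.
move=> satL [u i] [v j]; rewrite !inE /= => /andP[uv ij].
by rewrite uv ij (satL (u, v)).
Qed.

End Reduction.

Theorem mainTheorem5 (n k : nat) (EG : {set 'I_n * 'I_n})
  (pi : 'I_n -> 'I_n -> {set 'I_k * 'I_k})
  (Ecal : 'I_n -> 'I_n -> {set 'I_(Nred k EG) * 'I_(Nred k EG)}) :
  satisfiable EG pi ->
  (exists phi : VGt n (Nred k EG) -> VHt n k (Nred k EG),
      injective phi /\
      forall a b, (a, b) \in EGt EG Ecal -> (phi a, phi b) \in EHt EG pi Ecal)
  /\ OPTQAP EG pi Ecal = #|EGt EG Ecal|.
Proof.
move=> /satisfiable_labeling [L satL].
have phi_inj := @label_embedding_inj n k (Nred k EG) L.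
have phiE := label_embedding_edge (Ecal := Ecal) satL.
split; first by exists (label_embedding L).
exact: OPTQAP_edge_preserving phi_inj phiE.
Qed.
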